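(* Let $\mathcal H$ be a finite-dimensional Hilbert space and $\mathcal T\subset\mathcal S(\mathcal H)$ a set of quantum states. Then $\mathcal T$ does not allow for a proof of contextuality of quantum theory if and only if $\mathcal T$ is commutative (i.e. $\rho\rho'=\rho'\rho$ for all $\rho,\rho'\in\mathcal T$).
   Context: A set of states $\mathcal T$ does not allow for a proof of contextuality of quantum theory if there exist a POVM $\{G_\lambda\}_\lambda$ and states $\{\sigma_\lambda\}_\lambda$ on $\mathcal H$ (finite index set) such that $\mathrm{tr}[\rho M_k]=\sum_\lambda \mathrm{tr}[\rho G_\lambda]\mathrm{tr}[\sigma_\lambda M_k]$ for all $\rho\in\mathcal T$, all POVMs $\{M_k\}_k$ on $\mathcal H$ and all $k$; equivalently, $\rho=\sum_\lambda\mathrm{tr}[\rho G_\lambda]\sigma_\lambda$ for all $\rho\in\mathcal T$, i.e. $\mathcal T$ consists of fixed points of an entanglement breaking (measure-and-prepare) channel. *)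

From mathcomp Require Import all_boot all_order all_algebra.
Set Implicit Arguments. Unset Strict Implicit. Unset Printing Implicit Defensive.
Import Order.TTheory GRing.Theory Num.Theory.
Local Open Scope ring_scope.

(* Scalars: an arbitrary numClosedFieldType C (e.g. the complex numbers);
   the Hilbert space H is C^n, operators are n x n matrices. *)

Definition adjmx (C : numClosedFieldType) (m n : nat) (A : 'M[C]_(m, n)) : 'M[C]_(n, m) :=
  (map_mx Num.conj A)^T.

Definition psdmx (C : numClosedFieldType) (n : nat) (A : 'M[C]_n) : Prop :=
  adjmx A = A /\ forall v : 'cV[C]_n, 0 <= (adjmx v *m A *m v) 0 0.

Definition is_state (C : numClosedFieldType) (n : nat) (rho : 'M[C]_n) : Prop :=
  psdmx rho /\ \tr rho = 1.

Definition is_povm (C : numClosedFieldType) (n : nat) (K : finType) (M : K -> 'M[C]_n) : Prop :=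
  (forall k, psdmx (M k)) /\ \sum_k M k = 1%:M.

Definition no_contextuality_proof (C : numClosedFieldType) (n : nat)
    (T : 'M[C]_n -> Prop) : Prop :=
  exists (L : finType) (G : L -> 'M[C]_n) (sigma : L -> 'M[C]_n),
    is_povm G /\ (forall l, is_state (sigma l)) /\
    forall rho, T rho ->
      forall (K : finType) (M : K -> 'M[C]_n), is_povm M ->
        forall k, \tr (rho *m M k) =
                  \sum_l \tr (rho *m G l) * \tr (sigma l *m M k).

Definition commutative_set (C : numClosedFieldType) (n : nat) (T : 'M[C]_n -> Prop) : Prop :=
  forall rho rho', T rho -> T rho' -> rho *m rho' = rho' *m rho.

From Stdlib Require Import Classical.
From mathcomp Require Import all_boot all_order all_algebra zify.
Set Implicit Arguments. Unset Strict Implicit. Unset Printing Implicit Defensive.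
Import Order.TTheory GRing.Theory Num.Theory.
Local Open Scope ring_scope.

(* If every state of T is fixed by a measure-and-prepare channel
   rho |-> sum_l tr(rho G_l) sigma_l, then rho = sum_l q_l sigma_l where the
   weights q_l = tr(rho G_l) form a stationary vector of the column-stochastic
   matrix tr(sigma_l G_m). The support of a stationary vector is closed for
   this chain, and mixtures with disjoint supports multiply to zero: the
   outcomes in one support never occur on the other mixture. Cutting two
   stationary vectors down to their common support and subtracting from one
   the largest admissible multiple of the other shrinks its support, so
   induction on the support shows that all such mixtures commute. Conversely,
   commuting states are simultaneously diagonal in an orthonormal basis, and
   measuring and re-preparing in that basis fixes them. *)

(** * Adjoints and positive semidefinite matrices *)

Section Adjoint.
Variable C : numClosedFieldType.

Lemma adjmxE m n (A : 'M[C]_(m, n)) i j : adjmx A i j = (A j i)^*.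
Proof. by rewrite !mxE. Qed.

Lemma adjmxK m n (A : 'M[C]_(m, n)) : adjmx (adjmx A) = A.
Proof. by apply/matrixP => i j; rewrite !adjmxE conjCK. Qed.

Lemma adjmxM m n p (A : 'M[C]_(m, n)) (B : 'M[C]_(n, p)) :
  adjmx (A *m B) = adjmx B *m adjmx A.
Proof. by rewrite /adjmx map_mxM trmx_mul. Qed.

Lemma adjmxD m n (A B : 'M[C]_(m, n)) : adjmx (A + B) = adjmx A + adjmx B.
Proof. by rewrite /adjmx map_mxD linearD. Qed.

Lemma adjmxB m n (A B : 'M[C]_(m, n)) : adjmx (A - B) = adjmx A - adjmx B.
Proof. by rewrite /adjmx map_mxB linearB. Qed.

Lemma adjmxZ m n a (A : 'M[C]_(m, n)) : adjmx (a *: A) = a^* *: adjmx A.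
Proof. by rewrite /adjmx map_mxZ linearZ. Qed.

Lemma adjmx1 n : adjmx (1%:M : 'M[C]_n) = 1%:M.
Proof. by rewrite /adjmx map_mx1 trmx1. Qed.

Lemma adjmx_delta m n i j : adjmx (delta_mx i j : 'M[C]_(m, n)) = delta_mx j i.
Proof. by rewrite /adjmx map_delta_mx trmx_delta. Qed.

Lemma adjmx_trmxC m n (A : 'M[C]_(m, n)) : adjmx A = (A ^t Num.conj)%sesqui.
Proof. by rewrite /adjmx map_trmx. Qed.

Lemma adjmx_mulmx_dnorm n (x : 'cV[C]_n) :
  (adjmx x *m x) 0 0 = dotmx (adjmx x) (adjmx x).
Proof. by rewrite dotmxE -adjmx_trmxC adjmxK. Qed.

Lemma adjmx_mulmx_ge0 n (x : 'cV[C]_n) : 0 <= (adjmx x *m x) 0 0.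
Proof. by rewrite adjmx_mulmx_dnorm dnorm_ge0. Qed.

Lemma adjmx_mulmx_eq0 n (x : 'cV[C]_n) : (adjmx x *m x) 0 0 = 0 -> x = 0.
Proof.
rewrite adjmx_mulmx_dnorm => /eqP; rewrite dnorm_eq0 => /eqP x0.
by rewrite -[x]adjmxK x0 /adjmx map_mx0 trmx0.
Qed.

Lemma unitarymx_mul_adj n (P : 'M[C]_n) :
  P \is unitarymx -> P *m adjmx P = 1%:M /\ adjmx P *m P = 1%:M.
Proof.
move=> uP; rewrite adjmx_trmxC -invmx_unitary //.
by split; [apply: mulmxV | apply: mulVmx]; apply: unitarymx_unit.
Qed.

End Adjoint.

Section PositiveSemidefinite.
Variable C : numClosedFieldType.

Lemma mulmx3E m n p q (X : 'M[C]_(m, n)) (Y : 'M[C]_(n, p)) (Z : 'M[C]_(p, q)) i j :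
  (X *m Y *m Z) i j = (row i X *m Y *m col j Z) 0 0.
Proof. by rewrite -row_mul !mxE; apply: eq_bigr => k _; rewrite !mxE. Qed.

Lemma adjmx_col m n (A : 'M[C]_(m, n)) j : adjmx (col j A) = row j (adjmx A).
Proof. by apply/matrixP => i k; rewrite !mxE. Qed.

Lemma psdmx_factor n (A : 'M[C]_n) : psdmx A -> exists W : 'M[C]_n, A = W *m adjmx W.
Proof.
move=> [hA qA].
have /orthomx_spectralP eA : A \is normalmx.
  by apply/normalmxP; rewrite -adjmx_trmxC hA.
set P := spectralmx A in eA; set d := spectral_diag A in eA.
have [PP _] := unitarymx_mul_adj (spectral_unitarymx A).
rewrite invmx_unitary ?spectral_unitarymx // -adjmx_trmxC in eA.
have ePA : P *m A *m adjmx P = diag_mx d.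
  by rewrite eA !mulmxA PP mul1mx -mulmxA PP mulmx1.
have d_ge0 k : 0 <= d 0 k.
  have := qA (col k (adjmx P)); rewrite adjmx_col adjmxK.
  by rewrite -mulmx3E ePA mxE eqxx mulr1n.
pose s := \row_k sqrtC (d 0 k).
have adj_s : adjmx (diag_mx s) = diag_mx s.
  apply/matrixP => i j; rewrite adjmxE !mxE eq_sym.
  by case: eqP => [->|_]; rewrite ?conjC0 // geC0_conj ?sqrtC_ge0.
exists (adjmx P *m diag_mx s).
rewrite adjmxM adjmxK adj_s -mulmxA [diag_mx s *m _]mulmxA mulmx_diag.
have -> : \row_j (s 0 j * s 0 j) = d.
  by apply/matrixP => i j; rewrite ord1 !mxE -expr2 sqrtCK.
by rewrite mulmxA.
Qed.

Lemma psdmx_form_eq0 n (B : 'M[C]_n) (v : 'cV[C]_n) :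
  psdmx B -> (adjmx v *m B *m v) 0 0 = 0 -> B *m v = 0.
Proof.
move=> /psdmx_factor [W ->].
have -> : adjmx v *m (W *m adjmx W) *m v = adjmx (adjmx W *m v) *m (adjmx W *m v).
  by rewrite adjmxM adjmxK !mulmxA.
move=> /adjmx_mulmx_eq0 Wv0.
by rewrite -mulmxA Wv0 mulmx0.
Qed.

Lemma mxtrace_factor_mul n (W B : 'M[C]_n) :
  \tr (W *m adjmx W *m B) = \sum_k (adjmx (col k W) *m B *m col k W) 0 0.
Proof.
rewrite -mulmxA mxtrace_mulC /mxtrace; apply: eq_bigr => k _.
by rewrite [LHS]mulmx3E adjmx_col.
Qed.

Lemma psdmx_trace_ge0 n (A B : 'M[C]_n) : psdmx A -> psdmx B -> 0 <= \tr (A *m B).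
Proof.
move=> /psdmx_factor [W ->] [_ qB]; rewrite mxtrace_factor_mul.
by apply: sumr_ge0 => k _; apply: qB.
Qed.

(* Writing A = W W^*, the trace is a sum of the nonnegative forms of B at the
   columns of W, so B kills every column of W. *)
Lemma psdmx_trace_eq0 n (A B : 'M[C]_n) :
  psdmx A -> psdmx B -> \tr (A *m B) = 0 -> B *m A = 0.
Proof.
move=> /psdmx_factor [W ->] pB; rewrite mxtrace_factor_mul => tr0.
have BW : B *m W = 0.
  apply/matrixP => i k; have /colP/(_ i) : col k (B *m W) = 0.
    rewrite colE -mulmxA -colE; apply: psdmx_form_eq0 => //.
    exact: (psumr_eq0P (fun k _ => proj2 pB (col k W)) tr0 (i := k) isT).
  by rewrite !mxE.
by rewrite mulmxA BW mul0mx.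
Qed.

Lemma psdmx0 n : psdmx (0 : 'M[C]_n).
Proof. by split=> [|v]; rewrite ?mulmx0 ?mul0mx ?mxE /adjmx ?map_mx0 ?trmx0. Qed.

Lemma psdmxD n (A B : 'M[C]_n) : psdmx A -> psdmx B -> psdmx (A + B).
Proof.
move=> [hA qA] [hB qB]; split; first by rewrite adjmxD hA hB.
by move=> v; rewrite mulmxDr mulmxDl mxE addr_ge0.
Qed.

Lemma psdmxZ n a (A : 'M[C]_n) : 0 <= a -> psdmx A -> psdmx (a *: A).
Proof.
move=> a0 [hA qA]; split; first by rewrite adjmxZ hA geC0_conj.
by move=> v; rewrite -scalemxAr -scalemxAl mxE mulr_ge0.
Qed.

Lemma psdmx_sum n (I : finType) (P : pred I) (F : I -> 'M[C]_n) :
  (forall i, P i -> psdmx (F i)) -> psdmx (\sum_(i | P i) F i).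
Proof.
move=> pF; elim/big_rec: _ => [|i A Pi pA]; first exact: psdmx0.
exact: psdmxD (pF i Pi) pA.
Qed.

Lemma psdmx_proj n (E : 'M[C]_n) : adjmx E = E -> E *m E = E -> psdmx E.
Proof.
move=> hE iE; split => // v.
have -> : adjmx v *m E *m v = adjmx (E *m v) *m (E *m v).
  by rewrite adjmxM hE !mulmxA -[adjmx v *m E *m E]mulmxA iE.
exact: adjmx_mulmx_ge0.
Qed.

End PositiveSemidefinite.

Definition is_effect (C : numClosedFieldType) (n : nat) (E : 'M[C]_n) : Prop :=
  psdmx E /\ psdmx (1%:M - E).

Section TraceSeparation.
Variables (C : numClosedFieldType) (n : nat).

Lemma proj_effect (E : 'M[C]_n) : adjmx E = E -> E *m E = E -> is_effect E.
Proof.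
move=> hE iE; split; first exact: psdmx_proj.
apply: psdmx_proj; first by rewrite adjmxB adjmx1 hE.
by rewrite mulmxBl !mulmxBr !mul1mx !mulmx1 iE subrr subr0.
Qed.

(* Tested against the projection onto the line of u, X gives u^* X u / u^* u. *)
Lemma trace_effects_form_eq0 (X : 'M[C]_n) :
  (forall E, is_effect E -> \tr (X *m E) = 0) ->
  forall u : 'cV[C]_n, adjmx u *m X *m u = 0.
Proof.
move=> XE0 u; have [->|u0] := eqVneq u 0; first by rewrite mulmx0.
set a := (adjmx u *m u) 0 0.
have a0 : a != 0 by apply: contra u0 => /eqP /adjmx_mulmx_eq0 ->.
have uu : adjmx u *m u = a%:M by rewrite [LHS]mx11_scalar.
pose E := a^-1 *: (u *m adjmx u).
have hE : adjmx E = E.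
  by rewrite adjmxZ adjmxM adjmxK geC0_conj // invr_ge0 adjmx_mulmx_ge0.
have iE : E *m E = E.
  rewrite -scalemxAl -scalemxAr scalerA mulmxA -[u *m _ *m u]mulmxA uu.
  by rewrite mul_mx_scalar -scalemxAl scalerA -mulrA mulVf // mulr1.
have := XE0 E (proj_effect hE iE).
rewrite -scalemxAr mxtraceZ mulmxA mxtrace_mulC mulmxA trace_mx11.
move/eqP; rewrite mulf_eq0 invr_eq0 (negPf a0) => /eqP h.
by rewrite [LHS]mx11_scalar h raddf0.
Qed.

Lemma mx_form_eq0 (X : 'M[C]_n) :
  (forall u : 'cV[C]_n, adjmx u *m X *m u = 0) -> X = 0.
Proof.
move=> X0; pose q (u v : 'cV[C]_n) := adjmx u *m X *m v.
have q_expand c u v : q (u + c *: v) (u + c *: v) =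
    q u u + c *: q u v + c^* *: q v u + (c^* * c) *: q v v.
  rewrite /q adjmxD adjmxZ !mulmxDl !mulmxDr -!scalemxAl -!scalemxAr !scalerA.
  by rewrite !addrA; congr (_ + _); rewrite -!addrA; congr (_ + _); rewrite addrC.
have q_anti u v : q u v + q v u = 0.
  by have := q_expand 1 u v; rewrite /q !X0 conjC1 !scale1r scaler0 add0r addr0.
have q_sym u v : q u v = q v u.
  have := q_expand 'i u v; rewrite /q !X0 scaler0 add0r addr0 conjCi scaleNr.
  move/esym/eqP; rewrite -scalerBr scaler_eq0 (negPf (neq0Ci _)) subr_eq0.
  by move/eqP.
apply/matrixP => i j; rewrite mxE.
have /eqP : q (delta_mx i 0) (delta_mx j 0) = 0.
  have /eqP := q_anti (delta_mx i 0) (delta_mx j 0).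
  by rewrite -q_sym -mulr2n -scaler_nat scaler_eq0 pnatr_eq0 => /eqP.
rewrite /q adjmx_delta -rowE -colE => /eqP /matrixP /(_ 0 0).
by rewrite !mxE.
Qed.

Lemma trace_effects_eq0 (X : 'M[C]_n) :
  (forall E, is_effect E -> \tr (X *m E) = 0) -> X = 0.
Proof. by move=> XE0; apply/mx_form_eq0/trace_effects_form_eq0. Qed.

End TraceSeparation.

Lemma mxtrace_suml (R : comNzRingType) n (I : finType) (c : I -> R)
    (A : I -> 'M[R]_n) (B : 'M[R]_n) :
  \tr ((\sum_i c i *: A i) *m B) = \sum_i c i * \tr (A i *m B).
Proof.
rewrite mulmx_suml linear_sum; apply: eq_bigr => i _.
by rewrite -scalemxAl linearZ.
Qed.

Lemma no_contextuality_proofP (C : numClosedFieldType) (n : nat) (T : 'M[C]_n -> Prop) :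
  no_contextuality_proof T <->
  exists (L : finType) (G sigma : L -> 'M[C]_n),
    [/\ is_povm G, forall l, is_state (sigma l) &
        forall rho, T rho -> rho = \sum_l \tr (rho *m G l) *: sigma l].
Proof.
split=> [[L [G [sigma [pG [sS stat]]]]] | [L [G [sigma [pG sS Tfix]]]]].
  exists L, G, sigma; split=> // rho Trho; apply/eqP; rewrite -subr_eq0; apply/eqP.
  apply: trace_effects_eq0 => E [pE pE'].
  pose M (b : bool) := if b then E else 1%:M - E.
  have pM : is_povm M by split; [case | rewrite big_bool /= addrC subrK].
  by rewrite mulmxBl linearB /= (stat rho Trho _ M pM true) mxtrace_suml subrr.
exists L, G, sigma; do 2!split=> //; move=> rho Trho K M _ k.
by rewrite {1}(Tfix rho Trho) mxtrace_suml.
Qed.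

(** * Stationary weights of a measure-and-prepare channel *)

Lemma real_seq_argmin (R : numDomainType) (I : eqType) (f : I -> R) (i1 : I) (s : seq I) :
  {in i1 :: s, forall i, f i \is Num.real} ->
  exists2 i0, i0 \in i1 :: s & {in i1 :: s, forall i, f i0 <= f i}.
Proof.
elim: s i1 => [|j s IH] i1 real_f.
  by exists i1 => [|i]; rewrite ?mem_head // inE => /eqP ->.
have [|i0 i0s i0_min] := IH j; first by move=> i si; apply: real_f; rewrite inE si orbT.
have i0s' : i0 \in i1 :: j :: s by rewrite inE i0s orbT.
have [le_i1 | lt_i0] := real_leP (real_f i1 (mem_head _ _)) (real_f i0 i0s').
  exists i1; rewrite ?mem_head // => i; rewrite inE => /predU1P [-> // | si].
  exact: le_trans le_i1 (i0_min i si).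
exists i0 => // i; rewrite inE => /predU1P [-> | si]; [exact: ltW | exact: i0_min].
Qed.

Lemma real_argmin (R : numDomainType) (I : finType) (f : I -> R) (S : {set I}) :
  S != set0 -> {in S, forall i, f i \is Num.real} ->
  exists2 i0, i0 \in S & {in S, forall i, f i0 <= f i}.
Proof.
move=> /set0Pn [i1 Si1] real_f.
have sub_S : {subset i1 :: enum S <= S}.
  by move=> i; rewrite inE mem_enum => /predU1P [-> |].
have [i0 /sub_S Si0 i0_min] := real_seq_argmin (fun i si => real_f i (sub_S i si)).
by exists i0 => // i Si; apply: i0_min; rewrite inE mem_enum Si orbT.
Qed.

Section StationaryWeights.
Variables (C : numClosedFieldType) (n : nat) (L : finType) (G sigma : L -> 'M[C]_n).
Hypotheses (povmG : is_povm G) (state_sigma : forall l, is_state (sigma l)).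

Definition mixture (q : L -> C) : 'M[C]_n := \sum_l q l *: sigma l.

(* The probability of outcome [m] when [G] measures the prepared state
   [sigma l]; [stationary q] says that [q] is a nonnegative stationary vector
   of this column-stochastic matrix (see [mxtrace_mixture]). *)
Definition transition (m l : L) : C := \tr (sigma l *m G m).

Definition stationary (q : L -> C) : Prop :=
  (forall l, 0 <= q l) /\ (forall m, \tr (mixture q *m G m) = q m).

Definition supp (q : L -> C) : {set L} := [set l | q l != 0].

Definition closed_set (S : {set L}) : Prop :=
  forall l m, l \in S -> m \notin S -> transition m l = 0.

Definition restrict (S : {set L}) (q : L -> C) (l : L) : C :=
  if l \in S then q l else 0.

Lemma transition_ge0 m l : 0 <= transition m l.
Proof. exact: psdmx_trace_ge0 (state_sigma l).1 (povmG.1 m). Qed.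

Lemma sum_transition l : \sum_m transition m l = 1.
Proof. by rewrite -linear_sum -mulmx_sumr povmG.2 mulmx1 /= (state_sigma l).2. Qed.

Lemma mxtrace_mixture q m : \tr (mixture q *m G m) = \sum_l q l * transition m l.
Proof. exact: mxtrace_suml. Qed.

Lemma mixtureB q r : mixture (fun l => q l - r l) = mixture q - mixture r.
Proof.
by rewrite /mixture -sumrB; apply: eq_bigr => l _; rewrite scalerBl.
Qed.

Lemma mixtureZ t q : mixture (fun l => t * q l) = t *: mixture q.
Proof.
by rewrite /mixture scaler_sumr; apply: eq_bigr => l _; rewrite scalerA.
Qed.

Lemma stationaryB q r : stationary q -> stationary r ->
  (forall l, r l <= q l) -> stationary (fun l => q l - r l).
Proof.
move=> [_ qG] [_ rG] le_rq; split=> [l | m]; first by rewrite subr_ge0.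
by rewrite mixtureB mulmxBl linearB /= qG rG.
Qed.

Lemma stationaryZ t q : 0 <= t -> stationary q -> stationary (fun l => t * q l).
Proof.
move=> t_ge0 [q_ge0 qG]; split=> [l | m]; first exact: mulr_ge0.
by rewrite mixtureZ -scalemxAl linearZ /= qG.
Qed.

Lemma mixture_psd q : (forall l, 0 <= q l) -> psdmx (mixture q).
Proof. by move=> q_ge0; apply: psdmx_sum => l _; apply: psdmxZ (state_sigma l).1. Qed.

Lemma mixture_supp0 q : supp q = set0 -> mixture q = 0.
Proof.
move=> q0; apply: big1 => l _.
by have := in_set0 l; rewrite -q0 inE => /negbFE /eqP ->; rewrite scale0r.
Qed.

Lemma supp_restrict S q : supp (restrict S q) = S :&: supp q.
Proof. by apply/setP => l; rewrite !inE /restrict; case: (l \in S); rewrite ?eqxx. Qed.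

Lemma supp_sub_restrict S q : supp (fun l => q l - restrict S q l) = supp q :\: S.
Proof.
apply/setP => l; rewrite !inE /restrict.
by case: (l \in S); rewrite ?subrr ?eqxx ?subr0.
Qed.

Lemma closed_set_supp q : stationary q -> closed_set (supp q).
Proof.
move=> [q_ge0 qG] l m; rewrite !inE negbK => ql0 /eqP qm0.
have := qG m; rewrite mxtrace_mixture qm0 => /psumr_eq0P sum0.
have /eqP := sum0 (fun l _ => mulr_ge0 (q_ge0 l) (transition_ge0 m l)) l isT.
by rewrite mulf_eq0 (negPf ql0) => /eqP.
Qed.

Lemma closed_setI S S' : closed_set S -> closed_set S' -> closed_set (S :&: S').
Proof.
move=> cS cS' l m; rewrite !inE => /andP [lS lS'].
by rewrite negb_and => /orP [/(cS _ _ lS) | /(cS' _ _ lS')].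
Qed.

Lemma closed_set_mass S l : closed_set S -> l \in S -> \sum_(m in S) transition m l = 1.
Proof.
move=> cS lS; rewrite -(sum_transition l) [RHS](bigID (mem S)) /=.
by rewrite [X in _ = _ + X]big1 ?addr0 // => m; apply: cS.
Qed.

(* Summing stationarity over the closed set [S]: the mass of [S] is carried
   back to [S] by [S] itself, so no positive mass flows into [S] from outside. *)
Lemma stationary_inflow0 q S l m : stationary q -> closed_set S ->
  l \notin S -> m \in S -> q l * transition m l = 0.
Proof.
move=> [q_ge0 qG] cS lS mS.
have flow : \sum_(k in S) q k =
    \sum_(k in S) q k + \sum_(k | k \notin S) q k * \sum_(m in S) transition m k.
  rewrite {1}(eq_bigr (fun k => \sum_l q l * transition k l)); last first.
    by move=> k _; rewrite -mxtrace_mixture qG.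
  rewrite exchange_big (bigID (mem S)) /=; congr (_ + _).
    by apply: eq_bigr => k kS; rewrite -mulr_sumr closed_set_mass ?mulr1.
  by apply: eq_bigr => k _; rewrite mulr_sumr.
move: flow; rewrite -[X in X = _]addr0 => /addrI /esym out0.
have trans_ge0 k : 0 <= q l * transition k l := mulr_ge0 (q_ge0 l) (transition_ge0 k l).
have inflow0 : \sum_(k in S) q l * transition k l = 0.
  rewrite -mulr_sumr; apply: (psumr_eq0P _ out0) lS => k _.
  exact: mulr_ge0 (q_ge0 k) (sumr_ge0 _ (fun m _ => transition_ge0 m k)).
exact: (psumr_eq0P (fun k _ => trans_ge0 k) inflow0).
Qed.

Lemma stationary_restrict q S : stationary q -> closed_set S -> stationary (restrict S q).
Proof.
move=> sq cS; split=> [l | m]; first by rewrite /restrict; case: ifP => // _; apply: sq.1.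
rewrite mxtrace_mixture /restrict.
under eq_bigr do rewrite (fun_if (fun x => x * _)) mul0r.
rewrite -big_mkcond /=; case: ifP => mS.
  rewrite -[RHS]sq.2 mxtrace_mixture [RHS](bigID (mem S)) /=.
  rewrite -[LHS]addr0; congr (_ + _); apply/esym/big1 => l lS.
  exact: (stationary_inflow0 sq cS lS mS).
by apply: big1 => l lS; rewrite cS ?mS ?mulr0.
Qed.

Lemma mixture_mul_disjoint q q' : stationary q -> stationary q' ->
  [disjoint supp q & supp q'] -> mixture q *m mixture q' = 0.
Proof.
move=> [q_ge0 qG] [q'_ge0 q'G] dis.
pose Q := \sum_(m in supp q') G m; pose Q' := \sum_(m | m \notin supp q') G m.
have QQ' : Q + Q' = 1%:M by rewrite -povmG.2 [RHS](bigID (mem (supp q'))).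
have pQ : psdmx Q by apply: psdmx_sum => m _; apply: povmG.1.
have pQ' : psdmx Q' by apply: psdmx_sum => m _; apply: povmG.1.
have Qq : mixture q *m Q = 0.
  apply: (psdmx_trace_eq0 pQ (mixture_psd q_ge0)).
  rewrite mxtrace_mulC mulmx_sumr linear_sum /=; apply: big1 => m mq'.
  by rewrite qG; move: (disjointFl dis mq'); rewrite inE => /negbFE /eqP.
have Q'q' : Q' *m mixture q' = 0.
  apply: (psdmx_trace_eq0 (mixture_psd q'_ge0) pQ').
  by rewrite mulmx_sumr linear_sum /=; apply: big1 => m; rewrite q'G inE negbK => /eqP.
by rewrite -[mixture q']mul1mx -QQ' mulmxDl Q'q' addr0 mulmxA Qq mul0mx.
Qed.

(* Both factors can be cut down to the common support [S], which is closed: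
   the parts of [q] and [q'] outside [S] are disjoint from the other factor. *)
Lemma mixture_mul_common_supp q q' : stationary q -> stationary q' ->
  let S := supp q :&: supp q' in
  mixture q *m mixture q' = mixture (restrict S q) *m mixture (restrict S q').
Proof.
move=> sq sq' S.
have cS : closed_set S by apply: closed_setI; apply: closed_set_supp.
have split_off p : stationary p ->
    mixture p = mixture (restrict S p) + mixture (fun l => p l - restrict S p l)
    /\ stationary (fun l => p l - restrict S p l).
  move=> sp; rewrite mixtureB addrC subrK; split=> //.
  apply: stationaryB (stationary_restrict sp cS) _ => // l.
  by rewrite /restrict; case: ifP => // _; apply: sp.1.
have [-> sqc] := split_off q sq; have [eq' sq'c] := split_off q' sq'.
rewrite mulmxDl (mixture_mul_disjoint sqc sq') ?addr0; last first.
  rewrite -setI_eq0; apply/eqP/setP => l; rewrite supp_sub_restrict /S !inE.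
  by case: (q l != 0); case: (q' l != 0).
rewrite eq' mulmxDr (mixture_mul_disjoint (stationary_restrict sq cS) sq'c) ?addr0 //.
rewrite -setI_eq0; apply/eqP/setP => l; rewrite supp_restrict supp_sub_restrict /S !inE.
by case: (q l != 0); case: (q' l != 0).
Qed.

(* Subtracting the largest multiple of [q'] that keeps the weights nonnegative
   kills the weight at a minimiser of [q / q']. *)
Lemma stationary_shrink q q' : stationary q -> stationary q' ->
  supp q' = supp q -> supp q != set0 ->
  exists t r, [/\ stationary r, (#|supp r| < #|supp q|)%N &
                  mixture q = mixture r + t *: mixture q'].
Proof.
move=> sq sq' supp_eq supp_q0.
have [q_ge0 q'_ge0] := (sq.1, sq'.1).
have q'_gt0 l : l \in supp q -> 0 < q' l.
  by rewrite -supp_eq inE => q'l0; rewrite lt_def q'l0 q'_ge0.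
have [l0 l0q l0_min] := real_argmin (f := fun l => q l / q' l) supp_q0
  (fun l _ => ger0_real (divr_ge0 (q_ge0 l) (q'_ge0 l))).
pose t := q l0 / q' l0.
have le_tq' l : t * q' l <= q l.
  case: (boolP (l \in supp q)) => [lq | lNq]; first by rewrite -ler_pdivlMr ?q'_gt0 ?l0_min.
  have := lNq; rewrite -supp_eq; move: lNq; rewrite !inE !negbK => /eqP -> /eqP ->.
  by rewrite mulr0.
exists t, (fun l => q l - t * q' l); split.
- exact: stationaryB (stationaryZ (divr_ge0 (q_ge0 l0) (q'_ge0 l0)) sq') le_tq'.
- rewrite [#|supp q|](cardsD1 l0) l0q add1n ltnS subset_leq_card //; apply/subsetP => l.
  rewrite !inE; have [-> | nl0 /=] := eqVneq l l0.
    by rewrite /t divfK ?subrr ?eqxx // lt0r_neq0 // q'_gt0.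
  apply: contraNN => /eqP ql0; have : l \notin supp q' by rewrite supp_eq inE ql0 eqxx.
  by rewrite inE negbK ql0 => /eqP ->; rewrite mulr0 subrr.
- by rewrite mixtureB mixtureZ subrK.
Qed.

Lemma mixture_commute q q' : stationary q -> stationary q' ->
  mixture q *m mixture q' = mixture q' *m mixture q.
Proof.
move: {2}#|supp q| (leqnn #|supp q|) => N; elim: N q q' => [|N IH] q q' qN sq sq'.
  move: qN; rewrite leqn0 cards_eq0 => /eqP q0.
  by rewrite mixture_supp0 // mul0mx mulmx0.
rewrite mixture_mul_common_supp // [RHS]mixture_mul_common_supp // [supp q' :&: _]setIC.
set S := supp q :&: supp q'.
have cS : closed_set S by apply: closed_setI; apply: closed_set_supp.
have [sqS sq'S] := (stationary_restrict sq cS, stationary_restrict sq' cS).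
have supp_qS : supp (restrict S q) = S by rewrite supp_restrict /S setIC setIA setIid.
have supp_q'S : supp (restrict S q') = S by rewrite supp_restrict /S -setIA setIid.
have [S0 | SN0] := eqVneq S set0.
  by rewrite mixture_supp0 ?mul0mx ?mulmx0 // supp_qS.
have qSN0 : supp (restrict S q) != set0 by rewrite supp_qS.
have [t [r [sr r_lt ->]]] :=
  stationary_shrink sqS sq'S (etrans supp_q'S (esym supp_qS)) qSN0.
have rN : (#|supp r| <= N)%N.
  rewrite -ltnS (leq_trans r_lt) // (leq_trans _ qN) // supp_qS subset_leq_card //.
  exact: subsetIl.
by rewrite mulmxDl mulmxDr IH // -scalemxAl -scalemxAr.
Qed.

End StationaryWeights.

(** * Simultaneous diagonalisation of commuting states *)

Lemma dimv_span_cons (K : fieldType) (vT : vectType K) (x : vT) (s : seq vT) :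
  x \notin <<s>>%VS -> (\dim <<s>> < \dim <<x :: s>>)%N.
Proof.
move=> xNs; rewrite (ltn_leqif (dimv_leqif_sup _)) ?span_cons ?addvSr //.
by apply: contra xNs => /subvP; apply; rewrite -span_cons memv_span ?mem_head.
Qed.

Lemma exists_spanning_seq (K : fieldType) (vT : vectType K) (T : vT -> Prop) :
  exists s : seq vT, (forall x, x \in s -> T x) /\ forall x, T x -> x \in <<s>>%VS.
Proof.
have spans_or_grows (s : seq vT) : (forall x, T x -> x \in <<s>>%VS) \/
    exists2 x, T x & (\dim <<s>> < \dim <<x :: s>> <= \dim {:vT})%N.
  case: (classic (exists2 x, T x & x \notin <<s>>%VS)) => [[x Tx xNs] | none].
    by right; exists x; rewrite // dimv_span_cons ?dimvS ?subvf.
  by left=> x Tx; apply/negPn/negP => xNs; apply: none; exists x.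
suff grow k (s : seq vT) : (forall x, x \in s -> T x) ->
    (\dim {:vT} - \dim <<s>> <= k)%N ->
    exists s' : seq vT, (forall x, x \in s' -> T x) /\ forall x, T x -> x \in <<s'>>%VS.
  exact: (grow _ [::]).
elim: k s => [|k IH] s sT dim_s; have [spans | [x Tx /andP [lt_s le_x]]] := spans_or_grows s;
  try by exists s.
  by lia.
apply: (IH (x :: s)); last by lia.
by move=> y; rewrite inE => /predU1P [-> | /sT].
Qed.

Section UnitaryBasis.
Variables (C : numClosedFieldType) (n : nat).

Lemma herm_trig_is_diag (D : 'M[C]_n) : adjmx D = D -> is_trig_mx D -> is_diag_mx D.
Proof.
move=> hD /is_trig_mxP trigD; apply/is_diag_mxP => i j /negPf ij.
have [lt_ij | lt_ji | eq_ij] := ltngtP i j; first exact: trigD.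
  by rewrite -hD adjmxE trigD // conjC0.
by rewrite eq_ij eqxx in ij.
Qed.

Lemma commuting_herm_codiag (s : seq 'M[C]_n) :
  {in s, forall A, adjmx A = A} -> {in s &, forall A B, A *m B = B *m A} ->
  exists2 P : 'M[C]_n, P \is unitarymx & {in s, forall A, is_diag_mx (P *m A *m adjmx P)}.
Proof.
move=> herm_s comm_s; have [P uP /allP trig_s] := cotrigonalization comm_s.
exists P => // A As; apply: herm_trig_is_diag.
  by rewrite !adjmxM adjmxK herm_s ?mulmxA.
have := trig_s A As; rewrite /= /similar_to conjumx ?unitarymx_unit //.
by rewrite invmx_unitary // adjmx_trmxC.
Qed.

Lemma codiag_span (P : 'M[C]_n) (s : seq 'M[C]_n) (A : 'M[C]_n) :
  {in s, forall B, is_diag_mx (P *m B *m adjmx P)} -> A \in <<s>>%VS ->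
  is_diag_mx (P *m A *m adjmx P).
Proof.
move=> diag_s As; rewrite (coord_span (X := in_tuple s) As).
apply/is_diag_mxP => i j ij.
rewrite mulmx_sumr mulmx_suml summxE; apply: big1 => k _.
rewrite -scalemxAr -scalemxAl mxE (is_diag_mxP (diag_s _ _)) ?mulr0 //.
exact: mem_nth (ltn_ord k).
Qed.

Lemma mxtrace_mul_delta (A : 'M[C]_n) l : \tr (A *m delta_mx l l) = A l l.
Proof.
rewrite -(mul_delta_mx (0 : 'I_1)) mulmxA -colE mxtrace_mulC -rowE trace_mx11.
by rewrite !mxE.
Qed.

Variable P : 'M[C]_n.
Hypothesis unitaryP : P \is unitarymx.

Definition basis_proj (l : 'I_n) : 'M[C]_n := adjmx P *m delta_mx l l *m P.

Lemma mxtrace_basis_proj (A : 'M[C]_n) l :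
  \tr (A *m basis_proj l) = (P *m A *m adjmx P) l l.
Proof. by rewrite !mulmxA mxtrace_mulC !mulmxA mxtrace_mul_delta. Qed.

Lemma basis_proj_effect l : adjmx (basis_proj l) = basis_proj l /\
  basis_proj l *m basis_proj l = basis_proj l.
Proof.
have [PP _] := unitarymx_mul_adj unitaryP.
split; first by rewrite !adjmxM adjmxK adjmx_delta mulmxA.
rewrite /basis_proj -!mulmxA (mulmxA P) PP mul1mx.
by rewrite (mulmxA (delta_mx l l)) mul_delta_mx mulmxA.
Qed.

Lemma basis_proj_povm : is_povm basis_proj.
Proof.
split=> [l | ]; first by case: (basis_proj_effect l); apply: psdmx_proj.
have [_ PP] := unitarymx_mul_adj unitaryP.
rewrite -mulmx_suml -mulmx_sumr -PP; congr (_ *m _).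
by rewrite -[RHS]mulmx1 -diag_const_mx diag_mx_sum_delta; congr (_ *m _);
  apply: eq_bigr => l _; rewrite mxE scale1r.
Qed.

Lemma basis_proj_state l : is_state (basis_proj l).
Proof.
have [PP _] := unitarymx_mul_adj unitaryP.
split; first exact: basis_proj_povm.1.
by rewrite -[basis_proj l]mul1mx mxtrace_basis_proj mulmx1 PP mxE eqxx.
Qed.

Lemma basis_proj_decomp (A : 'M[C]_n) : is_diag_mx (P *m A *m adjmx P) ->
  A = \sum_l \tr (A *m basis_proj l) *: basis_proj l.
Proof.
have [PP PP'] := unitarymx_mul_adj unitaryP.
move=> /diag_mxP [d dA]; rewrite (eq_bigr (fun l => d 0 l *: basis_proj l)); last first.
  by move=> l _; rewrite mxtrace_basis_proj dA mxE eqxx mulr1n.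
rewrite /basis_proj (eq_bigr (fun l => adjmx P *m (d 0 l *: delta_mx l l) *m P)); last first.
  by move=> l _; rewrite scalemxAl scalemxAr.
rewrite -mulmx_suml -mulmx_sumr -diag_mx_sum_delta -dA.
by rewrite !mulmxA PP' mul1mx -mulmxA PP' mulmx1.
Qed.

End UnitaryBasis.

Lemma fixed_states_commute (C : numClosedFieldType) (n : nat) (T : 'M[C]_n -> Prop) :
  (forall rho, T rho -> is_state rho) -> no_contextuality_proof T -> commutative_set T.
Proof.
move=> T_state /no_contextuality_proofP [L [G [sigma [povmG sigma_state Tfix]]]].
have weights_stationary rho : T rho -> stationary G sigma (fun l => \tr (rho *m G l)).
  move=> Trho; split=> [l | m]; last by rewrite /mixture -Tfix.
  exact: psdmx_trace_ge0 (T_state _ Trho).1 (povmG.1 l).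
move=> rho rho' Trho Trho'.
have := mixture_commute povmG sigma_state
  (weights_stationary _ Trho) (weights_stationary _ Trho').
by rewrite /mixture -!Tfix.
Qed.

Lemma commuting_states_fixed (C : numClosedFieldType) (n : nat) (T : 'M[C]_n -> Prop) :
  (forall rho, T rho -> is_state rho) -> commutative_set T -> no_contextuality_proof T.
Proof.
move=> T_state T_comm; have [s [sT T_span]] := exists_spanning_seq T.
have [P uP diag_s] : exists2 P : 'M[C]_n, P \is unitarymx &
    {in s, forall A, is_diag_mx (P *m A *m adjmx P)}.
  apply: commuting_herm_codiag => [A /sT /T_state [[]] // | A B /sT TA /sT TB].
  exact: T_comm.
apply/no_contextuality_proofP; exists 'I_n, (basis_proj P), (basis_proj P).
split=> [|l|rho Trho]; [exact: basis_proj_povm | exact: basis_proj_state |].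
exact/basis_proj_decomp/(codiag_span diag_s)/T_span.
Qed.

Unset Implicit Arguments.

Theorem corollary2 (C : numClosedFieldType) (n : nat) (T : 'M[C]_n -> Prop)
  (HT : forall rho, T rho -> is_state rho) :
  no_contextuality_proof T <-> commutative_set T.
Proof. by split; [apply: fixed_states_commute | apply: commuting_states_fixed]. Qed.
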